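(* Let $p$ be a prime and let $f(t)\in\mathbb{Q}_p[[t]]$ with $f'(t)=\sum_{i\ge0}a_it^i\in\mathbb{Z}_p[[t]]$ and constant term $c\in\mathbb{Z}_p$. Let $\lambda=\min\big(\{v_p(a_{i-1}p^{i}/i)\}_{i\geq1}\cup\{v_p(c)\}\big)$ (assumed finite) and let $F(x)=f(px)/p^{\lambda}\in\mathbb{Z}_p[[x]]$ be the associated normalized power series, and assume $F$ converges on $\mathbb{Z}_p$. Fix a positive integer $N$, let $M=\min\{m\in\mathbb{Z}_{\ge1}: m-\lambda-\log_p(m)>N\}$, and write $F=F_M+F_\infty$ where $F_M$ consists of the terms of $F$ of degree at most $M$. Let $r\in\mathbb{Z}/p^N\mathbb{Z}$ be such that $F$ satisfies Hensel's lemma for $r$, and let $\tilde r\in\mathbb{Z}_p$ be the unique zero of $F$ lifting $r$ with $|r-\tilde r|_p<|F_M'(r)|_p$. Then $\tilde r\equiv r \pmod{p^{\,N-v_p(F_M'(r))}}$.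
   Context: $v_p$ is the $p$-adic valuation and $|\cdot|_p$ the $p$-adic absolute value; $\log_p$ is the real logarithm to base $p$. For $G\in\mathbb{Z}_p[[x]]$ converging on $\mathbb{Z}_p$ and $N$ a positive integer, let $\bar G$ denote the reduction of $G$ modulo $p^N$ (evaluation at $r\in\mathbb{Z}/p^N\mathbb{Z}$ means evaluating $G$ at any integer representative of $r$ and reducing mod $p^N$). One says $G$ satisfies Hensel's lemma for $r\in\mathbb{Z}/p^N\mathbb{Z}$ if $\bar G(r)\equiv 0 \pmod{p^N}$ and $\bar G'(r)^2\not\equiv 0\pmod{p^N}$. In the claim, $r$ is identified with an integer representative when computing $|r-\tilde r|_p$, $F_M'(r)$ and $v_p(F_M'(r))$. *)

From Stdlib Require Import Rdefinitions Raxioms RIneq Rpower.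
From mathcomp Require Import all_boot all_order all_algebra.
Set Implicit Arguments. Unset Strict Implicit. Unset Printing Implicit Defensive.
Import Order.TTheory GRing.Theory Num.Theory.
Local Open Scope ring_scope.

(* p-adic integers, represented by coherent sequences of integer            *)
(* approximations: x : nat -> int with x n.+1 = x n (mod p^n).  The element *)
(* of Z_p represented is lim x n; x n is its class modulo p^n.              *)
Definition coherent (p : nat) (x : nat -> int) : Prop :=
  forall n : nat, (x n.+1 == x n %[mod (p ^ n)%:Z])%Z.

(* v_p(x) >= k  (k an integer; vacuous for k <= 0; true for x = 0). *)
Definition vge (p : nat) (x : nat -> int) (k : int) : Prop :=
  forall n : nat, n%:Z <= k -> ((p ^ n)%:Z %| x n)%Z.

(* v_p(x) = k  (in particular x <> 0). *)
Definition vexact (p : nat) (x : nat -> int) (k : int) : Prop :=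
  vge p x k /\ ~ vge p x (k + 1).

(* A power series over Z_p is a coefficient family b : nat -> (nat -> int),
   b i being (the coherent sequence of) the i-th coefficient.
   psum p b x n K = the K-th partial sum  sum_{i<K} b_i x^i,  modulo p^n. *)
Definition psum (p : nat) (b : nat -> nat -> int) (x : nat -> int) (n K : nat)
  : int := \sum_(i < K) b i n * x n ^+ i.

Definition ps_conv_Zp (p : nat) (b : nat -> nat -> int) : Prop :=
  forall x, coherent p x -> forall n : nat, exists K : nat, forall K' : nat,
    (K <= K')%N -> (psum p b x n K' == psum p b x n K %[mod (p ^ n)%:Z])%Z.

Definition ps_val_cong (p : nat) (b : nat -> nat -> int) (x : nat -> int)
  (n : nat) (y : int) : Prop :=
  exists K : nat, forall K' : nat,
    (K <= K')%N -> (psum p b x n K' == y %[mod (p ^ n)%:Z])%Z.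

Definition ps_root (p : nat) (b : nat -> nat -> int) (x : nat -> int) : Prop :=
  forall n : nat, ps_val_cong p b x n 0.

Definition ps_deriv (b : nat -> nat -> int) : nat -> nat -> int :=
  fun i n => (i.+1)%:Z * b i.+1 n.

Definition cst (r : int) : nat -> int := fun _ => r.

(* Hensel's lemma condition for the residue class of r mod p^N:
   Fbar(r) = 0 mod p^N  and  Fbar'(r)^2 <> 0 mod p^N. *)
Definition hensel_at (p : nat) (b : nat -> nat -> int) (N : nat) (r : int)
  : Prop :=
  ps_val_cong p b (cst r) N 0 /\
  forall y : int, ps_val_cong p (ps_deriv b) (cst r) N y ->
    ~ ((p ^ N)%:Z %| y ^+ 2)%Z.

(* F_M'(r), where F_M = sum_{i<=M} b_i x^i; as an element of Z_p. *)
Definition truncM_deriv_at (b : nat -> nat -> int) (M : nat) (r : int)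
  : nat -> int :=
  fun n => \sum_(i < M) (i.+1)%:Z * b i.+1 n * r ^+ i.

(* lambda = min( { v_p(a_{i-1} p^i / i) }_{i>=1} U { v_p(c) } ),
   where v_p(a_{i-1} p^i / i) = v_p(a_{i-1}) + i - v_p(i).
   "lam is the minimum": lam is a lower bound, and it is attained. *)
Definition is_lambda (p : nat) (a : nat -> nat -> int) (c : nat -> int)
  (lam : int) : Prop :=
  ((forall i : nat, (1 <= i)%N -> vge p (a i.-1) (lam - i%:Z + (logn p i)%:Z))
   /\ vge p c lam)
  /\ ((exists2 i : nat, (1 <= i)%N & vexact p (a i.-1) (lam - i%:Z + (logn p i)%:Z))
      \/ vexact p c lam).

(* F(x) = f(p x) / p^lam, where f = c + sum_{i>=1} (a_{i-1}/i) t^i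
   (the unique series with f' = sum a_i t^i and constant term c).
   Cleared of denominators, coefficientwise in Z_p:
     p^lam * b_0 = c,   i * p^lam * b_i = a_{i-1} * p^i  (i >= 1). *)
Definition is_normalized (p : nat) (a : nat -> nat -> int) (c : nat -> int)
  (lam : nat) (b : nat -> nat -> int) : Prop :=
  (forall n : nat, ((p ^ lam)%:Z * b 0%N n == c n %[mod (p ^ n)%:Z])%Z) /\
  (forall i n : nat, (1 <= i)%N ->
     (i%:Z * (p ^ lam)%:Z * b i n == a i.-1 n * (p ^ i)%:Z %[mod (p ^ n)%:Z])%Z).

Definition M_cond (p lam N m : nat) : Prop :=
  Rlt (INR N) (Rminus (Rminus (INR m) (INR lam)) (Rdiv (ln (INR m)) (ln (INR p)))).

Definition is_M (p lam N M : nat) : Prop :=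
  (1 <= M)%N /\ M_cond p lam N M /\
  forall m : nat, (1 <= m)%N -> (m < M)%N -> ~ M_cond p lam N m.

From Stdlib Require Import Reals Lra.
From mathcomp Require Import all_boot all_order all_algebra.
From mathcomp Require Import zify ring.
Import Order.TTheory GRing.Theory Num.Theory.
Local Open Scope ring_scope.

(** Put d = r~ - r and T = F_M'(r), so that e = v(T) < v(d).  Since
    i p^lam b_i = a_(i-1) p^i, the coefficients i b_i of F' vanish modulo p^N
    once i >= N + lam, and M > N + lam; hence every partial sum of F' at r of
    length at least M is congruent to T modulo p^N.  Taylor
    expansion of a partial sum of F at r then gives
    0 = F(r + d) - F(r) = d T + d^2 q  (mod p^N).
    The linear term has valuation v(d) + e < 2 v(d) <= v(d^2 q), so the sum has
    valuation exactly v(d) + e, which therefore is at least N. *)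

Lemma horner_taylor2 {R : comNzRingType} (q : {poly R}) (x h : R) :
  exists s, q.[x + h] = q.[x] + q^`().[x] * h + h ^+ 2 * s.
Proof.
exists (\sum_(i < size q) q^`N(i.+2).[x] * h ^+ i).
rewrite (nderiv_taylor_wide (mulrC x h) (leq_trans (leqnSn _) (leqnSn (size q).+1))).
rewrite !big_ord_recl nderivn0 nderivn1 expr0 mulr1 expr1 addrA mulr_sumr.
congr (_ + _); apply: eq_bigr => i _ /=; rewrite !exprS; ring.
Qed.

Lemma horner_deriv_poly {R : nzSemiRingType} (E : nat -> R) (K : nat) (x : R) :
  (\poly_(i < K.+1) E i)^`().[x] = \sum_(i < K) E i.+1 *+ i.+1 * x ^+ i.
Proof.
have -> : (\poly_(i < K.+1) E i)^`() = \poly_(i < K) (E i.+1 *+ i.+1).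
  by apply/polyP => i; rewrite coef_deriv !coef_poly ltnS; case: ifP; rewrite ?mul0rn.
by rewrite horner_poly.
Qed.

Lemma pfactor_dvdz (p k : nat) (d : int) : prime p -> d != 0 ->
  ((p ^ k)%:Z %| d)%Z = (k <= logn p `|d|)%N.
Proof. by move=> pp d0; rewrite dvdzE /= pfactor_dvdn // absz_gt0. Qed.

Lemma dvdz_exp2l (p : nat) {m n : nat} : (m <= n)%N -> ((p ^ m)%:Z %| (p ^ n)%:Z)%Z.
Proof. by move=> mn; rewrite dvdzE /= dvdn_exp2l. Qed.

Lemma dvdz_of_linear_dominant {p e N : nat} {d t q : int} : prime p -> (e < N)%N ->
  ((p ^ e.+1)%:Z %| d)%Z -> ((p ^ e)%:Z %| t)%Z -> ~ ((p ^ e.+1)%:Z %| t)%Z ->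
  ((p ^ N)%:Z %| d * t + d ^+ 2 * q)%Z -> ((p ^ (N - e))%:Z %| d)%Z.
Proof.
move=> pp eN hd ht ht1 hS.
have [->|d0] := eqVneq d 0; first exact: dvdz0.
have t0 : t != 0 by apply: contra_notN ht1 => /eqP ->; apply: dvdz0.
move: hd ht ht1; rewrite !pfactor_dvdz // => hd ht /negP ht1.
set L := logn p `|d| in hd *; rewrite leqNgt; apply/negP => hL.
have hdL : ((p ^ L)%:Z %| d)%Z by rewrite pfactor_dvdz.
have hsq : ((p ^ (e + L).+1)%:Z %| d ^+ 2 * q)%Z.
  apply: dvdz_mulr; apply: (@dvdz_trans (p ^ (L + L))%:Z).
    by apply: dvdz_exp2l; lia.
  by rewrite expnD PoszM expr2 dvdz_mul.
have hsum : ((p ^ (e + L).+1)%:Z %| d * t + d ^+ 2 * q)%Z.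
  by apply: dvdz_trans hS; apply: dvdz_exp2l; lia.
have := rpredB hsum hsq; rewrite addrK pfactor_dvdz ?mulf_neq0 //.
rewrite abszM lognM ?absz_gt0 // -/L; lia.
Qed.

Section PadicSequences.

Context {p : nat}.

Lemma coherent_dvd_sub {x : nat -> int} {m n : nat} : coherent p x -> (m <= n)%N ->
  ((p ^ m)%:Z %| x n - x m)%Z.
Proof.
move=> hx; elim: n => [|n IHn]; first by rewrite leqn0 => /eqP ->; rewrite subrr dvdz0.
rewrite leq_eqVlt => /predU1P [<-|]; first by rewrite subrr dvdz0.
rewrite ltnS => mn; rewrite -(subrKA (x n)) rpredDr ?IHn //.
by have := hx n; rewrite eqz_mod_dvd; apply: dvdz_trans; apply: dvdz_exp2l.
Qed.

Lemma coherent_dvd_level {x : nat -> int} {k n : nat} : coherent p x -> (k <= n)%N ->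
  ((p ^ k)%:Z %| x n)%Z = ((p ^ k)%:Z %| x k)%Z.
Proof.
by move=> hx kn; rewrite -(subrK (x k) (x n)) rpredDl ?coherent_dvd_sub.
Qed.

Lemma vge_nat_level {x : nat -> int} {k n : nat} : coherent p x -> (k <= n)%N ->
  vge p x k%:Z <-> ((p ^ k)%:Z %| x n)%Z.
Proof.
move=> hx kn; rewrite (coherent_dvd_level hx kn).
split=> [/(_ k (lexx _)) //|hk m]; rewrite lez_nat => mk.
by rewrite -(coherent_dvd_level hx mk); apply: dvdz_trans hk; apply: dvdz_exp2l.
Qed.

Lemma vge_le0 {x : nat -> int} {k : int} : k <= 0 -> vge p x k.
Proof. by move=> k0 [|n] nk //; have := le_trans nk k0. Qed.

Lemma coherent_subr {x : nat -> int} (r : int) : coherent p x ->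
  coherent p (fun n => x n - r).
Proof. by move=> hx n; rewrite eqz_mod_dvd opprB addrA subrK -eqz_mod_dvd. Qed.

Lemma coherent_truncM_deriv_at {b : nat -> nat -> int} (M : nat) (r : int) :
  (forall i, coherent p (b i)) -> coherent p (truncM_deriv_at b M r).
Proof.
move=> hb n; rewrite eqz_mod_dvd /truncM_deriv_at -sumrB; apply: rpred_sum => i _.
rewrite -mulrBl -mulrBr; apply: dvdz_mulr; apply: dvdz_mull; rewrite -eqz_mod_dvd; exact: hb.
Qed.

End PadicSequences.

Lemma dvdz_normalized_coef {p : nat} {a b : nat -> nat -> int} {c : nat -> int}
    {lam N i : nat} : (0 < p)%N ->
  is_normalized p a c lam b -> coherent p (b i) -> (N + lam <= i)%N ->
  ((p ^ N)%:Z %| i%:Z * b i N)%Z.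
Proof.
move=> p0 [_ hnorm] hbi hi; case: i hbi hi => [|i] hbi hi; first by rewrite mul0r dvdz0.
set L := (N + lam)%N.
have hL : ((p ^ L)%:Z %| i.+1%:Z * (p ^ lam)%:Z * b i.+1 L)%Z.
  have := hnorm i.+1 L isT; rewrite eqz_mod_dvd => hcong.
  rewrite -(subrK (a i L * (p ^ i.+1)%:Z) (_ * _ * _)); apply: rpredD hcong _.
  by apply: dvdz_mull; apply: dvdz_exp2l.
have hN : ((p ^ N)%:Z %| i.+1%:Z * b i.+1 L)%Z.
  have plam0 : (p ^ lam)%:Z != 0 by rewrite eqz_nat -lt0n expn_gt0 p0.
  by move: hL; rewrite /L expnD PoszM mulrAC dvdz_mul2r.
rewrite -(subrK (i.+1%:Z * b i.+1 L) (_ * _)) -mulrBr; apply: rpredD hN.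
by apply: dvdz_mull; rewrite -opprB rpredN; apply: coherent_dvd_sub hbi (leq_addr _ _).
Qed.

Lemma truncM_deriv_at_cong {p : nat} {a b : nat -> nat -> int} {c : nat -> int}
    {lam N M K : nat} {r : int} : (0 < p)%N ->
  is_normalized p a c lam b -> (forall i, coherent p (b i)) ->
  (N + lam <= M.+1)%N -> (M <= K)%N ->
  ((p ^ N)%:Z %| truncM_deriv_at b K r N - truncM_deriv_at b M r N)%Z.
Proof.
move=> p0 hnorm hb hM MK.
rewrite /truncM_deriv_at -!(big_mkord xpredT (fun i => (i.+1)%:Z * b i.+1 N * r ^+ i)).
rewrite (big_cat_nat (leq0n M) MK) /= addrAC subrr add0r big_seq.
apply: rpred_sum => i; rewrite mem_index_iota => /andP [Mi _].
by apply: dvdz_mulr; apply: dvdz_normalized_coef p0 hnorm (hb _) _; lia.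
Qed.

Lemma hensel_taylor_cong {p : nat} {a b : nat -> nat -> int} {c : nat -> int}
    {lam N M : nat} {r : int} {x : nat -> int} :
  (0 < p)%N -> is_normalized p a c lam b -> (forall i, coherent p (b i)) ->
  (N + lam <= M.+1)%N -> ps_val_cong p b (cst r) N 0 -> ps_val_cong p b x N 0 ->
  exists q, ((p ^ N)%:Z %| (x N - r) * truncM_deriv_at b M r N + (x N - r) ^+ 2 * q)%Z.
Proof.
move=> p0 hnorm hb hM [Kr hr] [Kx hx].
set K := maxn (maxn Kr Kx) M; set d := x N - r; set F := \poly_(i < K.+1) b i N.
have [KrK KxK] : (Kr <= K.+1)%N /\ (Kx <= K.+1)%N by rewrite /K; lia.
have psumE y : psum p b y N K.+1 = F.[y N] by rewrite horner_poly.
have hFr : ((p ^ N)%:Z %| F.[r])%Z.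
  by have := hr K.+1 KrK; rewrite psumE eqz_mod_dvd subr0.
have hFx : ((p ^ N)%:Z %| F.[r + d])%Z.
  by have := hx K.+1 KxK; rewrite psumE eqz_mod_dvd subr0 /d addrC subrK.
have F'E : F^`().[r] = truncM_deriv_at b K r N.
  by rewrite horner_deriv_poly; apply: eq_bigr => i _; rewrite -mulr_natl natz.
have [q hq] := horner_taylor2 F r d; exists q.
have -> : d * truncM_deriv_at b M r N + d ^+ 2 * q =
    (F.[r + d] - F.[r]) - d * (truncM_deriv_at b K r N - truncM_deriv_at b M r N).
  by rewrite hq -F'E; ring.
apply: rpredB; first exact: rpredB.
by apply: dvdz_mull; apply: truncM_deriv_at_cong p0 hnorm hb hM (leq_maxr _ _).
Qed.

Local Open Scope R_scope.
Lemma is_M_gt {p lam N M : nat} : (1 < p)%N -> is_M p lam N M -> (N + lam < M)%N.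
Proof.
move=> p1 [M1 [hM _]]; move: hM; rewrite /M_cond => hM.
have lnp : (0 < ln (INR p)).
  by rewrite -ln_1; apply: ln_increasing; [lra | apply: (lt_INR 1); apply/ssrnat.ltP].
have lnM : (0 <= ln (INR M)).
  rewrite -ln_1; have /le_INR : (1 <= M)%coq_nat by apply/ssrnat.leP.
  case/Rle_lt_or_eq_dec => [hlt|<-]; last exact: Rle_refl.
  by apply: Rlt_le; apply: ln_increasing; [lra | exact: hlt].
have logM : (0 <= ln (INR M) / ln (INR p)).
  by apply: Rmult_le_pos lnM _; apply: Rlt_le; apply: Rinv_0_lt_compat.
apply/ssrnat.ltP; apply: INR_lt; rewrite plus_INR; lra.
Qed.
Local Close Scope R_scope.

Theorem lemma3p6
  (p : nat) (a : nat -> nat -> int) (c : nat -> int) (lam : nat)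
  (b : nat -> nat -> int) (N M : nat) (r : int) (rt : nat -> int) (e : nat) :
  prime p ->
  (forall i : nat, coherent p (a i)) ->
  coherent p c ->
  is_lambda p a c lam%:Z ->
  (forall i : nat, coherent p (b i)) ->
  is_normalized p a c lam b ->
  ps_conv_Zp p b ->
  (0 < N)%N ->
  is_M p lam N M ->
  hensel_at p b N r ->
  coherent p rt ->
  ps_root p b rt ->
  vexact p (truncM_deriv_at b M r) e%:Z ->
  vge p (fun n => rt n - r) (e%:Z + 1) ->
  vge p (fun n => rt n - r) (N%:Z - e%:Z).
Proof.
(* Only the coefficient relations of [is_normalized], the bound N + lam < M and
   the two zeros of F modulo p^N are used. *)
move=> pp _ _ _ hb hnorm _ _ hM [hFr _] hrt hroot [hTe hTe1] hd.
have [Ne|eN] := leqP N e; first by apply: vge_le0; rewrite subr_le0 lez_nat.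
have hdc := coherent_subr r hrt; have hTc := coherent_truncM_deriv_at M r hb.
have e1 : e%:Z + 1 = e.+1%:Z by rewrite -addn1 PoszD.
rewrite e1 (vge_nat_level hdc eN) in hd; rewrite e1 (vge_nat_level hTc eN) in hTe1.
move/(vge_nat_level hTc (ltnW eN)): hTe => hTe.
rewrite subzn 1?ltnW // (vge_nat_level hdc (leq_subr e N)).
have NM := is_M_gt (prime_gt1 pp) hM.
have [q hq] := hensel_taylor_cong (prime_gt0 pp) hnorm hb (leqW (ltnW NM)) hFr (hroot N).
exact: dvdz_of_linear_dominant pp eN hd hTe hTe1 hq.
Qed.
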